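(* Let $(\mathcal C,\mathcal D,O,\vec z,v)$ be a configuration for $(F,f)$, let $\mathcal D'\subseteq\mathcal D$, and let either $\mathcal C'=\mathcal C$, or $\mathcal C'=\mathcal C\setminus\{C\}$ for a PB constraint $C$ for which there is a substitution $\omega$ with $$\mathcal C'\cup\{f\le v-1\}\cup\{\neg C\}\ \vdash\ (\mathcal C'\cup\{C\})|_\omega\cup\{f|_\omega\le f\}\cup O(\vec z|_\omega,\vec z).$$ If $(\mathcal C,\mathcal D,O,\vec z,v)$ is weakly valid then $(\mathcal C',\mathcal D',O,\vec z,v)$ is weakly valid; if it is valid then $(\mathcal C',\mathcal D',O,\vec z,v)$ is valid.
   Context: Boolean variables take values in $\{0,1\}$; a literal is a variable $x$ or $\bar x=1-x$. A PB constraint is $C:\ \sum_i a_i\ell_i\ge A$ with integer $a_i,A$; its negation $\neg C$ is $\sum_i -a_i\ell_i\ge -A+1$. A total assignment $\alpha$ satisfies $C$ if $\sum_i a_i\alpha(\ell_i)\ge A$. A PB formula is a finite set of PB constraints. A substitution $\omega$ maps variables to literals or to $\{0,1\}$ (identity outside its domain, extended to literals by $\omega(\bar x)=\overline{\omega(x)}$); $C|_\omega$ replaces each $\ell_i$ by $\omega(\ell_i)$, $G|_\omega=\{D|_\omega: D\in G\}$, and for a total assignment $\alpha$, $\alpha\circ\omega$ is $x\mapsto\alpha(\omega(x))$. An objective is $f=\sum_i w_i\ell_i$ with integer $w_i$; $f|_\omega=\sum_i w_i\omega(\ell_i)$; $f\le k$ and $f|_\omega\le f$ are read as PB constraints, and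 for $k=\infty$ the constraints $f\le\infty$, $f\le\infty-1$ are trivially true (empty). $G\vdash D$ means $D$ is derivable from $G$ in the cutting planes system (axioms from $G$, literal axioms $\ell\ge0$, positive integer linear combinations, division of a constraint with nonnegative coefficients by a positive integer rounding coefficients and degree up), where additionally $G\vdash D$ whenever $0\ge1$ is so derivable from $G\cup\{\neg D\}$; $G\vdash H$ means $G\vdash D$ for all $D\in H$. This derivability is sound. A preorder encoding is a PB formula $O(\vec u,\vec v)$ over two lists of $n$ placeholder variables with a list $\vec z=(z_1,\dots,z_n)$ of variables, such that $\alpha\preceq\beta$ iff $O(\vec z|_\alpha,\vec z|_\beta)$ is true is reflexive and transitive; here $O(\vec z|_\alpha,\vec z|_\beta)$ is $O$ with $u_i$ replaced by $\alpha(z_i)$ and $v_i$ by $\beta(z_i)$, so $O(\vec z|_\omega,\vec z)$ replaces $u_i$ by $\omega(z_i)$ and $v_i$ by $z_i$. $\alpha\preceq_f\beta$ iff $\alpha\preceq\beta$ and $f(\alpha)\le f(\beta)$. Fix input $F$ and objective $f$. A configuration $(\mathcal C,\mathcal D,O,\vec z,v)$ has PB sets $\mathcal C,\mathcal D$, a preorder encoding, and $v\in\mathbb Z\cup\{\infty\}$. It is weakly valid if (1) for every integer $v'<v$, satisfiability of $F\cup\{f\le v'\}$ implies satisfiability of $\mathcal C\cup\{f\le v'\}$; (2) every total $\rho$ satisfying $\mathcal C\cup\{f\le v-1\}$ admits a total $\rho'\preceq_f\rho$ satisfying $\mathcal C\cup\mathcal D\cup\{f\le v-1\}$. It is valid if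 also (3) $v<\infty$ implies $F\cup\{f\le v\}$ satisfiable; (4) for every integer $v'<v$, satisfiability of $\mathcal C\cup\{f\le v'\}$ implies satisfiability of $F\cup\{f\le v'\}$. *)

From Stdlib Require Import ZArith List Fin.
Import ListNotations.
Open Scope Z_scope.

Inductive lit (V : Type) : Type := Pos (x : V) | Neg (x : V).
Arguments Pos {V} x.
Arguments Neg {V} x.

(** A PB constraint  sum_i a_i l_i >= A  is (list of (a_i, l_i), A). *)
Definition constraint (V : Type) : Type := (list (Z * lit V) * Z)%type.
Definition terms {V} (C : constraint V) := fst C.
Definition degree {V} (C : constraint V) := snd C.

Definition var := nat.
Definition assignment := var -> bool.

Definition b2z (b : bool) : Z := if b then 1 else 0.

Definition eval_lit {V} (a : V -> bool) (l : lit V) : Z :=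
  match l with Pos x => b2z (a x) | Neg x => 1 - b2z (a x) end.

Definition eval_terms {V} (a : V -> bool) (ts : list (Z * lit V)) : Z :=
  fold_right (fun t s => fst t * eval_lit a (snd t) + s) 0 ts.

Definition sat_c {V} (a : V -> bool) (C : constraint V) : Prop :=
  eval_terms a (terms C) >= degree C.

(** A PB formula is a finite set of constraints, represented by a list;
    all notions below depend only on membership. *)
Definition sat_f {V} (a : V -> bool) (G : list (constraint V)) : Prop :=
  forall C, In C G -> sat_c a C.

Definition satisfiable (G : list (constraint var)) : Prop :=
  exists a : assignment, sat_f a G.

Definition neg_c {V} (C : constraint V) : constraint V :=
  (map (fun t => (- fst t, snd t)) (terms C), - degree C + 1).

Inductive sval (W : Type) : Type := SLit (l : lit W) | SConst (b : bool).
Arguments SLit {W} l.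
Arguments SConst {W} b.

Definition sval_neg {W} (s : sval W) : sval W :=
  match s with
  | SLit (Pos x) => SLit (Neg x)
  | SLit (Neg x) => SLit (Pos x)
  | SConst b => SConst (negb b)
  end.

Definition subst_lit {V W} (om : V -> sval W) (l : lit V) : sval W :=
  match l with Pos x => om x | Neg x => sval_neg (om x) end.

Definition subst_terms {V W} (om : V -> sval W) (ts : list (Z * lit V))
  : (list (Z * lit W) * Z) :=
  fold_right (fun t acc =>
    match subst_lit om (snd t) with
    | SLit l => ((fst t, l) :: fst acc, snd acc)
    | SConst b => (fst acc, fst t * b2z b + snd acc)
    end) ([], 0) ts.

Definition subst_c {V W} (om : V -> sval W) (C : constraint V) : constraint W :=
  let p := subst_terms om (terms C) in (fst p, degree C - snd p).

Definition subst_f {V W} (om : V -> sval W) (G : list (constraint V))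
  : list (constraint W) := map (subst_c om) G.

Definition compose (a : assignment) (om : var -> sval var) : assignment :=
  fun x => match om x with
           | SLit l => Z.eqb (eval_lit a l) 1
           | SConst b => b
           end.

Definition objective := list (Z * lit var).
Definition eval_obj (f : objective) (a : assignment) : Z := eval_terms a f.

Definition obj_le (f : objective) (k : Z) : constraint var :=
  (map (fun t => (- fst t, snd t)) f, - k).

(** v in Z u {oo}: [None] is oo. The formula {f <= v - 1} (empty for oo). *)
Definition obj_le_vm1 (f : objective) (v : option Z) : list (constraint var) :=
  match v with Some k => [obj_le f (k - 1)] | None => [] end.

(** f|_om <= f  as the PB constraint  f - (terms of f|_om) >= (const of f|_om). *)
Definition obj_subst_le (f : objective) (om : var -> sval var) : constraint var :=
  let p := subst_terms om f in
  (f ++ map (fun t => (- fst t, snd t)) (fst p), snd p).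

(** Cutting planes. Two constraints are identified when they denote the
    same linear form over variables (rewriting Neg x as 1 - x). *)
Definition coef (C : constraint var) (x : var) : Z :=
  fold_right (fun t s =>
    match snd t with
    | Pos y => if Nat.eqb x y then fst t + s else s
    | Neg y => if Nat.eqb x y then - fst t + s else s
    end) 0 (terms C).

Definition norm_degree (C : constraint var) : Z :=
  degree C - fold_right (fun t s =>
    match snd t with Pos _ => s | Neg _ => fst t + s end) 0 (terms C).

Definition same_form (C D : constraint var) : Prop :=
  (forall x, coef C x = coef D x) /\ norm_degree C = norm_degree D.

Definition ceil_div (a d : Z) : Z := (a + d - 1) / d.

Inductive cp (G : list (constraint var)) : constraint var -> Prop :=
| cp_axiom : forall C, In C G -> cp G C
| cp_lit : forall l, cp G ([(1, l)], 0)
| cp_add : forall C1 C2, cp G C1 -> cp G C2 ->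
    cp G (terms C1 ++ terms C2, degree C1 + degree C2)
| cp_scale : forall c C, c > 0 -> cp G C ->
    cp G (map (fun t => (c * fst t, snd t)) (terms C), c * degree C)
| cp_div : forall d C, d > 0 -> cp G C ->
    (forall t, In t (terms C) -> fst t >= 0) ->
    cp G (map (fun t => (ceil_div (fst t) d, snd t)) (terms C), ceil_div (degree C) d)
| cp_same : forall C D, cp G C -> same_form C D -> cp G D.

Definition derives (G : list (constraint var)) (D : constraint var) : Prop :=
  cp G D \/ cp (neg_c D :: G) ([], 1).

Definition derives_all (G H : list (constraint var)) : Prop :=
  forall D, In D H -> derives G D.

(** Preorder encodings: O(u, v) over placeholders u_i = (false, i),
    v_i = (true, i), i < n, together with z = (z_1, ..., z_n). *)
Record penc := {
  pe_n : nat;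
  pe_O : list (constraint (bool * Fin.t pe_n));
  pe_z : Fin.t pe_n -> var }.

Definition pre (O : penc) (a b : assignment) : Prop :=
  sat_f (fun p : bool * Fin.t (pe_n O) =>
           if fst p then b (pe_z O (snd p)) else a (pe_z O (snd p))) (pe_O O).

Definition is_preorder_enc (O : penc) : Prop :=
  (forall a, pre O a a) /\
  (forall a b c, pre O a b -> pre O b c -> pre O a c).

Definition O_subst (O : penc) (om : var -> sval var) : list (constraint var) :=
  subst_f (fun p : bool * Fin.t (pe_n O) =>
             if fst p then SLit (Pos (pe_z O (snd p))) else om (pe_z O (snd p)))
          (pe_O O).

Definition pre_f (O : penc) (f : objective) (a b : assignment) : Prop :=
  pre O a b /\ eval_obj f a <= eval_obj f b.

Definition lt_v (v' : Z) (v : option Z) : Prop :=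
  match v with Some k => v' < k | None => True end.

Definition weakly_valid (F : list (constraint var)) (f : objective)
  (Cs Ds : list (constraint var)) (O : penc) (v : option Z) : Prop :=
  (forall v', lt_v v' v ->
     satisfiable (F ++ [obj_le f v']) -> satisfiable (Cs ++ [obj_le f v'])) /\
  (forall rho : assignment, sat_f rho (Cs ++ obj_le_vm1 f v) ->
     exists rho', pre_f O f rho' rho /\ sat_f rho' (Cs ++ Ds ++ obj_le_vm1 f v)).

Definition valid (F : list (constraint var)) (f : objective)
  (Cs Ds : list (constraint var)) (O : penc) (v : option Z) : Prop :=
  weakly_valid F f Cs Ds O v /\
  (forall k, v = Some k -> satisfiable (F ++ [obj_le f k])) /\
  (forall v', lt_v v' v ->
     satisfiable (Cs ++ [obj_le f v']) -> satisfiable (F ++ [obj_le f v'])).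

From Stdlib Require Import ZArith List Lia Classical.
Import ListNotations.
Open Scope Z_scope.

(** Shrinking [Ds] only weakens condition (2), and dropping a constraint from
    [Cs] only enlarges the solution set.  The redundancy hypothesis repairs the
    second change: an assignment [rho] that satisfies [Cs'] and [f <= v - 1] but
    violates [C] satisfies the premises of the derivation, so by soundness of
    cutting planes [rho o omega] satisfies [Cs' u {C}] and lies below [rho] in
    the order [<=_f].  Hence every solution of the new configuration dominates
    a solution of the old one, and transitivity of [<=_f] transfers (weak)
    validity. *)

Section Evaluation.

Variables (V : Type) (a : V -> bool).

Lemma eval_lit_01 l : eval_lit a l = 0 \/ eval_lit a l = 1.
Proof. destruct l as [x|x]; simpl; destruct (a x); simpl; auto. Qed.

Lemma eval_terms_cons t ts :
  eval_terms a (t :: ts) = fst t * eval_lit a (snd t) + eval_terms a ts.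
Proof. reflexivity. Qed.

Lemma eval_terms_app ts1 ts2 :
  eval_terms a (ts1 ++ ts2) = eval_terms a ts1 + eval_terms a ts2.
Proof.
  induction ts1 as [|t ts1 IH]; [reflexivity|].
  unfold eval_terms in *; simpl; rewrite IH; lia.
Qed.

Lemma eval_terms_opp ts :
  eval_terms a (map (fun t => (- fst t, snd t)) ts) = - eval_terms a ts.
Proof.
  induction ts as [|t ts IH]; [reflexivity|].
  unfold eval_terms in *; simpl; rewrite IH; lia.
Qed.

Lemma eval_terms_scale c ts :
  eval_terms a (map (fun t => (c * fst t, snd t)) ts) = c * eval_terms a ts.
Proof.
  induction ts as [|t ts IH]; [cbn; lia|].
  unfold eval_terms in *; simpl; rewrite IH; lia.
Qed.

Lemma ceil_div_mul_ge x d : d > 0 -> d * ceil_div x d >= x.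
Proof.
  intro Hd; unfold ceil_div.
  pose proof (Z.div_mod (x + d - 1) d ltac:(lia)).
  pose proof (Z.mod_pos_bound (x + d - 1) d ltac:(lia)).
  lia.
Qed.

Lemma ceil_div_le x d s : d > 0 -> d * s >= x -> ceil_div x d <= s.
Proof.
  intros Hd H; unfold ceil_div.
  enough ((x + d - 1) / d < s + 1) by lia.
  apply Z.div_lt_upper_bound; lia.
Qed.

Lemma eval_terms_ceil_div d ts : d > 0 ->
  d * eval_terms a (map (fun t => (ceil_div (fst t) d, snd t)) ts)
  >= eval_terms a ts.
Proof.
  intro Hd; induction ts as [|[c l] ts IH]; [simpl; lia|].
  unfold eval_terms in *; simpl.
  pose proof (ceil_div_mul_ge c d Hd).
  destruct (eval_lit_01 l) as [E|E]; rewrite E; nia.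
Qed.

Lemma sat_f_app G1 G2 : sat_f a (G1 ++ G2) <-> sat_f a G1 /\ sat_f a G2.
Proof.
  unfold sat_f; split.
  - intros H; split; intros C HC; apply H, in_app_iff; auto.
  - intros [H1 H2] C HC; apply in_app_iff in HC as [HC|HC]; auto.
Qed.

Lemma sat_neg_c C : ~ sat_c a C -> sat_c a (neg_c C).
Proof. unfold sat_c, neg_c; simpl; rewrite eval_terms_opp; lia. Qed.

End Evaluation.

Lemma eval_terms_ext {V} (a b : V -> bool) ts :
  (forall x, a x = b x) -> eval_terms a ts = eval_terms b ts.
Proof.
  intro Hab; induction ts as [|[c l] ts IH]; [reflexivity|].
  unfold eval_terms in *; simpl; rewrite IH.
  destruct l; simpl; rewrite Hab; reflexivity.
Qed.

Fixpoint zsum (N : nat) (g : nat -> Z) : Z :=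
  match N with 0%nat => 0 | S n => zsum n g + g n end.

Lemma zsum_ext N g h :
  (forall x, (x < N)%nat -> g x = h x) -> zsum N g = zsum N h.
Proof.
  induction N as [|N IH]; intros Hgh; simpl; [reflexivity|].
  rewrite IH, Hgh; [reflexivity|lia|intros x Hx; apply Hgh; lia].
Qed.

Lemma zsum_add N g h : zsum N (fun x => g x + h x) = zsum N g + zsum N h.
Proof. induction N; simpl; lia. Qed.

Lemma zsum_indicator N y c (h : nat -> Z) : (y < N)%nat ->
  zsum N (fun x => (if Nat.eqb x y then c else 0) * h x) = c * h y.
Proof.
  induction N as [|N IH]; intros Hy; [lia|]; simpl.
  destruct (Nat.eqb_spec N y) as [<-|Ny].
  - rewrite (zsum_ext _ _ (fun _ => 0)).
    + clear; induction N; simpl; lia.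
    + intros x Hx; destruct (Nat.eqb_spec x N); [lia|reflexivity].
  - rewrite IH by lia; lia.
Qed.

Definition neg_const (ts : list (Z * lit var)) : Z :=
  fold_right (fun t s => match snd t with Pos _ => s | Neg _ => fst t + s end) 0 ts.

Definition var_bound (ts : list (Z * lit var)) : nat :=
  fold_right (fun t s => match snd t with Pos y | Neg y => S y + s end)%nat 0%nat ts.

(* Reading [Neg y] as [1 - y] splits a linear form into its coefficient vector
   and a constant; these are the data [same_form] compares. *)
Lemma eval_terms_coef a ts d N : (var_bound ts <= N)%nat ->
  eval_terms a ts = zsum N (fun x => coef (ts, d) x * b2z (a x)) + neg_const ts.
Proof.
  induction ts as [|[c [y|y]] ts IH]; intros HN.
  - simpl; clear; induction N; simpl; lia.
  - simpl in HN.
    rewrite (zsum_ext _ _ (fun x => (if Nat.eqb x y then c else 0) * b2z (a x)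
                                    + coef (ts, d) x * b2z (a x)))
      by (intros x _; unfold coef; simpl; destruct (Nat.eqb x y); lia).
    rewrite eval_terms_cons, (IH ltac:(lia)), zsum_add, zsum_indicator by lia.
    simpl; lia.
  - simpl in HN.
    rewrite (zsum_ext _ _ (fun x => (if Nat.eqb x y then - c else 0) * b2z (a x)
                                    + coef (ts, d) x * b2z (a x)))
      by (intros x _; unfold coef; simpl; destruct (Nat.eqb x y); lia).
    rewrite eval_terms_cons, (IH ltac:(lia)), zsum_add, zsum_indicator by lia.
    change (neg_const ((c, Neg y) :: ts)) with (c + neg_const ts); cbn [fst snd eval_lit]; ring.
Qed.

Lemma same_form_sat a C D : same_form C D -> sat_c a C -> sat_c a D.
Proof.
  intros [Hcoef Hdeg]; destruct C as [tc dc], D as [td dd].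
  unfold sat_c, norm_degree in *; simpl in *.
  fold (neg_const tc) (neg_const td) in Hdeg.
  set (N := (var_bound tc + var_bound td)%nat).
  rewrite (eval_terms_coef a tc dc N), (eval_terms_coef a td dd N) by lia.
  rewrite (zsum_ext _ _ (fun x => coef (td, dd) x * b2z (a x)))
    by (intros x _; rewrite Hcoef; reflexivity).
  lia.
Qed.

Lemma cp_sound G a D : sat_f a G -> cp G D -> sat_c a D.
Proof.
  intros HG H; induction H; unfold sat_c in *; simpl in *.
  - apply HG; assumption.
  - unfold eval_terms; simpl.
    destruct (eval_lit_01 _ a l) as [E|E]; rewrite E; lia.
  - rewrite eval_terms_app; lia.
  - rewrite eval_terms_scale; nia.
  - pose proof (eval_terms_ceil_div _ a d (terms C) H).
    apply Z.le_ge, ceil_div_le; lia.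
  - eapply same_form_sat; eassumption.
Qed.

Lemma derives_sound G a D : sat_f a G -> derives G D -> sat_c a D.
Proof.
  intros HG [H|H]; [eapply cp_sound; eassumption|].
  destruct (classic (sat_c a D)) as [SD|SD]; [assumption|exfalso].
  enough (Hfalse : sat_c a ([] : list (Z * lit var), 1)) by (cbv in Hfalse; auto).
  eapply cp_sound; [|exact H].
  intros E [<-|HE]; [apply sat_neg_c|apply HG]; assumption.
Qed.

Lemma derives_all_sound G H a : sat_f a G -> derives_all G H -> sat_f a H.
Proof. intros HG HH D HD; eapply derives_sound; [exact HG|apply HH, HD]. Qed.

(* [compose] for arbitrary variable types, as needed for the placeholder
   variables of a preorder encoding. *)
Definition assign_comp {V W} (a : W -> bool) (om : V -> sval W) : V -> bool :=
  fun x => match om x with SLit l => Z.eqb (eval_lit a l) 1 | SConst b => b end.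

Definition eval_sval {W} (a : W -> bool) (s : sval W) : Z :=
  match s with SLit l => eval_lit a l | SConst b => b2z b end.

Section Substitution.

Variables (V W : Type) (a : W -> bool) (om : V -> sval W).

Lemma b2z_assign_comp x : b2z (assign_comp a om x) = eval_sval a (om x).
Proof.
  unfold assign_comp; destruct (om x) as [l|b]; [simpl|reflexivity].
  destruct (eval_lit_01 _ a l) as [E|E]; rewrite E; reflexivity.
Qed.

Lemma eval_subst_lit l : eval_sval a (subst_lit om l) = eval_lit (assign_comp a om) l.
Proof.
  destruct l as [x|x]; cbn [subst_lit eval_lit]; rewrite b2z_assign_comp; [reflexivity|].
  destruct (om x) as [[y|y]|[|]]; cbn [sval_neg eval_sval eval_lit negb b2z]; lia.
Qed.

Lemma eval_subst_terms ts :
  eval_terms (assign_comp a om) ts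
  = eval_terms a (fst (subst_terms om ts)) + snd (subst_terms om ts).
Proof.
  induction ts as [|[c l] ts IH]; [reflexivity|].
  unfold subst_terms, eval_terms in *; simpl in *.
  rewrite <- eval_subst_lit.
  destruct (subst_lit om l); simpl in *; rewrite IH; lia.
Qed.

Lemma sat_subst_c C : sat_c a (subst_c om C) -> sat_c (assign_comp a om) C.
Proof. unfold sat_c, subst_c; simpl; rewrite eval_subst_terms; lia. Qed.

End Substitution.

Lemma sat_subst_f rho om G :
  sat_f rho (subst_f om G) -> sat_f (compose rho om) G.
Proof. intros H C HC; apply sat_subst_c, H, in_map, HC. Qed.

Lemma sat_obj_le a f k : sat_c a (obj_le f k) <-> eval_obj f a <= k.
Proof. unfold sat_c, obj_le, eval_obj; simpl; rewrite eval_terms_opp; lia. Qed.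

Lemma sat_obj_subst_le rho f om :
  sat_c rho (obj_subst_le f om) -> eval_obj f (compose rho om) <= eval_obj f rho.
Proof.
  unfold sat_c, obj_subst_le, eval_obj; simpl.
  rewrite eval_terms_app, eval_terms_opp.
  change (compose rho om) with (assign_comp rho om).
  rewrite eval_subst_terms; lia.
Qed.

Lemma sat_O_subst O rho om : sat_f rho (O_subst O om) -> pre O (compose rho om) rho.
Proof.
  intros H D HD.
  pose proof (sat_subst_c _ _ _ _ _ (H _ (in_map _ _ _ HD))) as HDsub.
  unfold sat_c in *; erewrite eval_terms_ext; [exact HDsub|].
  intros [[|] i]; unfold assign_comp; simpl; [|reflexivity].
  destruct (rho (pe_z O i)); reflexivity.
Qed.

Lemma sat_obj_le_vm1 a f v :
  sat_f a (obj_le_vm1 f v) <-> (forall k, v = Some k -> eval_obj f a <= k - 1).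
Proof.
  destruct v as [k|]; simpl; split.
  - intros H k' [= <-]; apply sat_obj_le, H; left; reflexivity.
  - intros H C [<-|[]]; apply sat_obj_le, H; reflexivity.
  - discriminate.
  - intros _ C [].
Qed.

Lemma sat_obj_le_vm1_mono a b f v :
  eval_obj f a <= eval_obj f b -> sat_f b (obj_le_vm1 f v) -> sat_f a (obj_le_vm1 f v).
Proof.
  rewrite !sat_obj_le_vm1; intros Hab Hb k Hk; specialize (Hb k Hk); lia.
Qed.

Lemma pre_f_refl O f a : is_preorder_enc O -> pre_f O f a a.
Proof. intros [HO _]; split; [apply HO|lia]. Qed.

Lemma pre_f_trans O f a b c :
  is_preorder_enc O -> pre_f O f a b -> pre_f O f b c -> pre_f O f a c.
Proof. intros [_ HO] [H1 H2] [H3 H4]; split; [eapply HO; eassumption|lia]. Qed.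

Section Transfer.

Variables (F : list (constraint var)) (f : objective) (O : penc) (v : option Z).
Variables (Cs Ds Cs' Ds' : list (constraint var)).

Hypothesis HO : is_preorder_enc O.
Hypothesis HDs : forall D, In D Ds' -> In D Ds.
Hypothesis HCs : forall D, In D Cs' -> In D Cs.

Hypothesis Hdominated : forall rho, sat_f rho Cs' -> sat_f rho (obj_le_vm1 f v) ->
  exists r, pre_f O f r rho /\ sat_f r Cs.

Lemma weakly_valid_transfer :
  weakly_valid F f Cs Ds O v -> weakly_valid F f Cs' Ds' O v.
Proof.
  intros [Hopt Hsol]; split.
  - intros v' Hv HF; destruct (Hopt v' Hv HF) as [a Ha]; exists a.
    apply sat_f_app in Ha as [HaC HaF]; apply sat_f_app; split; [|exact HaF].
    intros C HC; apply HaC, HCs, HC.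
  - intros rho Hrho; apply sat_f_app in Hrho as [HrhoC Hrhov].
    destruct (Hdominated rho HrhoC Hrhov) as [r [Hr HrC]].
    assert (Hrv : sat_f r (obj_le_vm1 f v))
      by (eapply sat_obj_le_vm1_mono; [apply Hr|exact Hrhov]).
    destruct (Hsol r (proj2 (sat_f_app _ _ _ _) (conj HrC Hrv))) as [r' [Hr' Hr'sat]].
    exists r'; split; [eapply pre_f_trans; eassumption|].
    apply sat_f_app in Hr'sat as [Hr'C Hr'sat]; apply sat_f_app in Hr'sat as [Hr'D Hr'v].
    repeat (apply sat_f_app; split); try assumption.
    + intros C HC; apply Hr'C, HCs, HC.
    + intros D HD; apply Hr'D, HDs, HD.
Qed.

Lemma valid_transfer : valid F f Cs Ds O v -> valid F f Cs' Ds' O v.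
Proof.
  intros [Hweak [Hub Hsound]]; split; [apply weakly_valid_transfer, Hweak|].
  split; [exact Hub|].
  intros v' Hv [rho Hrho]; apply sat_f_app in Hrho as [HrhoC Hrhov'].
  assert (Hle : eval_obj f rho <= v') by (apply sat_obj_le, Hrhov'; left; reflexivity).
  assert (Hrhov : sat_f rho (obj_le_vm1 f v))
    by (apply sat_obj_le_vm1; intros k ->; simpl in Hv; lia).
  destruct (Hdominated rho HrhoC Hrhov) as [r [Hr HrC]].
  apply Hsound; [exact Hv|]; exists r; apply sat_f_app; split; [exact HrC|].
  intros C [<-|[]]; apply sat_obj_le; destruct Hr; lia.
Qed.

End Transfer.

Lemma redundant_removal_dominated f O v Cs Cs' C om rho :
  is_preorder_enc O ->
  (forall D, In D Cs' <-> In D Cs /\ D <> C) ->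
  derives_all (Cs' ++ obj_le_vm1 f v ++ [neg_c C])
    (subst_f om (C :: Cs') ++ [obj_subst_le f om] ++ O_subst O om) ->
  sat_f rho Cs' -> sat_f rho (obj_le_vm1 f v) ->
  exists r, pre_f O f r rho /\ sat_f r Cs.
Proof.
  intros HO HCs Hder HrhoC Hrhov.
  assert (Hcore : forall r, sat_f r (C :: Cs') -> sat_f r Cs).
  { intros r Hr D HD; apply Hr.
    destruct (classic (D = C)) as [->|HDC]; [left|right; apply HCs]; auto. }
  destruct (classic (sat_c rho C)) as [HrhoCC|HrhoCC].
  - exists rho; split; [apply pre_f_refl, HO|apply Hcore].
    intros D [<-|HD]; auto.
  - assert (Himage : sat_f rho (subst_f om (C :: Cs') ++ [obj_subst_le f om] ++ O_subst O om)).
    { eapply derives_all_sound; [|exact Hder].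
      repeat (apply sat_f_app; split); try assumption.
      intros D [<-|[]]; apply sat_neg_c, HrhoCC. }
    apply sat_f_app in Himage as [HimC Himage]; apply sat_f_app in Himage as [Himf HimO].
    exists (compose rho om); repeat split.
    + apply sat_O_subst, HimO.
    + apply sat_obj_subst_le, Himf; left; reflexivity.
    + apply Hcore, sat_subst_f, HimC.
Qed.

Theorem mainTheorem5 (F : list (constraint var)) (f : objective)
  (Cs Ds : list (constraint var)) (O : penc) (v : option Z)
  (Cs' Ds' : list (constraint var)) :
  is_preorder_enc O ->
  (forall D, In D Ds' -> In D Ds) ->
  ((forall D, In D Cs' <-> In D Cs) \/
   (exists C : constraint var,
      (forall D, In D Cs' <-> (In D Cs /\ D <> C)) /\
      exists om : var -> sval var,
        derives_all (Cs' ++ obj_le_vm1 f v ++ [neg_c C])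
          (subst_f om (C :: Cs') ++ [obj_subst_le f om] ++ O_subst O om))) ->
  (weakly_valid F f Cs Ds O v -> weakly_valid F f Cs' Ds' O v) /\
  (valid F f Cs Ds O v -> valid F f Cs' Ds' O v).
Proof.
  intros HO HDs Hcase.
  assert (HCs : forall D, In D Cs' -> In D Cs).
  { intros D HD; destruct Hcase as [Heq|[C [Hrem _]]]; [apply Heq|apply Hrem]; exact HD. }
  assert (Hdominated : forall rho, sat_f rho Cs' -> sat_f rho (obj_le_vm1 f v) ->
            exists r, pre_f O f r rho /\ sat_f r Cs).
  { intros rho HrhoC Hrhov; destruct Hcase as [Heq|[C [Hrem [om Hder]]]].
    - exists rho; split; [apply pre_f_refl, HO|].
      intros D HD; apply HrhoC, Heq, HD.
    - eapply redundant_removal_dominated; eassumption. }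
  split.
  - apply weakly_valid_transfer; assumption.
  - apply valid_transfer; assumption.
Qed.
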